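(* Let $\mathcal{P}=\{P_1,\ldots,P_n\}$, let $\mathcal{Q}\subseteq 2^{\mathcal{P}}$ and let $\mathcal{F}\subseteq 2^{\mathcal{P}}$ be a fail-prone system. Consider the ideal $I=\langle \xi_{\mathcal{Q}_{\bar X}},\ \xi_{\mathcal{Q}_{\bar Y}},\ \sigma+1\rangle\subseteq\mathbb{B}(\bar X,\bar Y)$ and let $\mathcal{G}$ be a Gröbner basis for $I$. If $\mathcal{G}=\{1\}$, then $\mathcal{Q}$ fulfills consistency, i.e. $Q_1\cap Q_2\neq\emptyset$ for all $Q_1,Q_2\in\mathcal{Q}$.
   Context: $\mathbb{B}=\mathbb{F}_2$ and $\mathbb{B}(\bar X,\bar Y)=\mathbb{B}[X_1,\ldots,X_n,Y_1,\ldots,Y_n]/\langle X_i^2-X_i,Y_i^2-Y_i\rangle$ is the Boolean polynomial ring. $\varphi:2^{\mathcal{P}}\to\mathbb{B}^n$ sends a set to its indicator vector. For $S\subseteq\mathcal{P}$, $\xi_S(\bar Z)=\prod_{i=1}^n(1+Z_i+\varphi(S)_i)$; for $\mathcal{A}\subseteq 2^{\mathcal{P}}$, $\xi_{\mathcal{A}_{\bar Z}}=\prod_{A\in\mathcal{A}}(\xi_A(\bar Z)+1)$. $\sigma(\bar X,\bar Y)=\prod_{i=1}^n(X_iY_i+1)$. A fail-prone system is a collection of subsets of $\mathcal{P}$ none of which is contained in another. Gröbner bases are with respect to the lexicographic order with block order $\bar Y<\bar X$ and $X_n\prec\cdots\prec X_1$, $Y_n\prec\cdots\prec Y_1$: a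 generating set $\mathcal{G}$ of $I$ such that every nonzero $f\in I$ has leading monomial divisible by the leading monomial of some $g\in\mathcal{G}$. *)

From HB Require Import structures.
From mathcomp Require Import all_boot all_order all_algebra.
From mathcomp Require Import mpoly.
Set Implicit Arguments. Unset Strict Implicit. Unset Printing Implicit Defensive.
Import Order.TTheory GRing.Theory.
Local Open Scope ring_scope.

(* Processes P_1..P_n are indexed by 'I_n; subsets of P are {set 'I_n}.
   The 2n variables X_1..X_n, Y_1..Y_n are the variables of {mpoly 'F_2[n+n]}:
   X_i = 'X_(lshift n i), Y_i = 'X_(rshift n i). *)
Definition BPoly (n : nat) := {mpoly 'F_2[n + n]}.

Definition Xv (n : nat) (i : 'I_n) : BPoly n := 'X_(lshift n i).
Definition Yv (n : nat) (i : 'I_n) : BPoly n := 'X_(rshift n i).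

Definition phi (n : nat) (S : {set 'I_n}) (i : 'I_n) : 'F_2 := (i \in S)%:R.

Definition xiS (n : nat) (Z : 'I_n -> BPoly n) (S : {set 'I_n}) : BPoly n :=
  \prod_(i < n) (1 + Z i + (phi S i)%:MP).

Definition xiA (n : nat) (Z : 'I_n -> BPoly n) (A : {set {set 'I_n}}) : BPoly n :=
  \prod_(S in A) (xiS Z S + 1).

Definition sigma (n : nat) : BPoly n := \prod_(i < n) (Xv i * Yv i + 1).

(* field equations X_i^2 - X_i, Y_i^2 - Y_i defining B(X,Y) as a quotient *)
Definition field_eqs (n : nat) : seq (BPoly n) :=
  [seq 'X_j ^+ 2 - 'X_j | j <- enum 'I_(n + n)].

Definition in_ideal (n : nat) (gens : seq (BPoly n)) (f : BPoly n) : Prop :=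
  exists cs : seq (BPoly n), size cs = size gens /\
    f = \sum_(k < size gens) cs`_k * gens`_k.

(* Elements of B(X,Y) are represented by their canonical (multilinear)
   representatives: every variable occurs with exponent <= 1. *)
Definition multilinear (n : nat) (f : BPoly n) : Prop :=
  forall m, m \in msupp f -> forall j, (m j <= 1)%N.

Definition memB (n : nat) (gens : seq (BPoly n)) (f : BPoly n) : Prop :=
  multilinear f /\ in_ideal (gens ++ field_eqs n) f.

(* Lex order with X_1 > ... > X_n > Y_1 > ... > Y_n, i.e. variable index 0
   most significant (block order Y < X, X_n < ... < X_1, Y_n < ... < Y_1). *)
Definition lex_lt (n : nat) (m1 m2 : 'X_{1..n + n}) : Prop :=
  exists j : 'I_(n + n),
    (forall i : 'I_(n + n), (i < j)%N -> m1 i = m2 i) /\ (m1 j < m2 j)%N.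
Definition lex_le (n : nat) (m1 m2 : 'X_{1..n + n}) : Prop :=
  m1 = m2 \/ lex_lt m1 m2.

Definition is_LM (n : nat) (f : BPoly n) (m : 'X_{1..n + n}) : Prop :=
  m \in msupp f /\ forall m', m' \in msupp f -> lex_le m' m.

Definition groebner_basis (n : nat) (gens G : seq (BPoly n)) : Prop :=
  (forall g, g \in G -> memB gens g) /\
  (forall f, memB gens f -> memB G f) /\
  (forall f, memB gens f -> f != 0 ->
     exists2 g, g \in G &
       exists mf mg, [/\ is_LM f mf, is_LM g mg & (mg <= mf)%MM]).

Definition fail_prone (n : nat) (F : {set {set 'I_n}}) : Prop :=
  forall F1 F2, F1 \in F -> F2 \in F -> F1 \subset F2 -> F1 = F2.

Definition consistency (n : nat) (Q : {set {set 'I_n}}) : Prop :=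
  forall Q1 Q2, Q1 \in Q -> Q2 \in Q -> Q1 :&: Q2 != set0.

(** If two quorums [Q1], [Q2] were disjoint, the point [X = phi Q1], [Y = phi Q2]
    of [B^2n] would be a common zero of all generators of [I] and of the field
    equations: [xi_{Q_X}] has the vanishing factor [xi_{Q1}(X) + 1], likewise
    [xi_{Q_Y}], and [sigma = 1] because no index lies in both quorums.  Every
    element of [I] then vanishes at that point, so [1] is not in [I]; but
    [G = {1}] is contained in [I]. *)

From mathcomp Require Import all_boot all_order all_algebra finfield.
From mathcomp Require Import mpoly.
Set Implicit Arguments. Unset Strict Implicit. Unset Printing Implicit Defensive.
Import GRing.Theory.
Local Open Scope ring_scope.

Lemma F2_addrr (x : 'F_2) : x + x = 0.
Proof. exact/addrr_pchar2/pchar_Fp. Qed.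

Lemma F2_expr2 (x : 'F_2) : x ^+ 2 = x.
Proof. by have := expf_card x; rewrite card_Fp. Qed.

Section Evaluation.

Variables (n : nat) (v : 'I_(n + n) -> 'F_2).

Lemma meval_in_ideal (gens : seq (BPoly n)) (f : BPoly n) :
  (forall g, g \in gens -> meval v g = 0) -> in_ideal gens f -> meval v f = 0.
Proof.
move=> gens0 [cs [_ ->]]; rewrite raddf_sum /=.
by apply: big1 => k _; rewrite mevalM [X in _ * X]gens0 ?mulr0 // mem_nth.
Qed.

Lemma meval_field_eqs g : g \in field_eqs n -> meval v g = 0.
Proof. by case/mapP => j _ ->; rewrite mevalB rmorphXn /= mevalXU F2_expr2 subrr. Qed.

Lemma meval_xiS (Z : 'I_n -> BPoly n) S :
  (forall i, meval v (Z i) = phi S i) -> meval v (xiS Z S) = 1.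
Proof.
move=> vZ; rewrite /xiS rmorph_prod /=; apply: big1 => i _.
by rewrite !mevalD meval1 mevalC vZ -addrA F2_addrr addr0.
Qed.

Lemma meval_xiA (Z : 'I_n -> BPoly n) (A : {set {set 'I_n}}) S :
  S \in A -> (forall i, meval v (Z i) = phi S i) -> meval v (xiA Z A) = 0.
Proof.
move=> SA vZ; rewrite /xiA rmorph_prod /= (bigD1 S) //=.
by rewrite mevalD meval1 meval_xiS // F2_addrr mul0r.
Qed.

End Evaluation.

Section IndicatorPoint.

Variables (n : nat) (Q1 Q2 : {set 'I_n}).

Definition indicator_point (j : 'I_(n + n)) : 'F_2 :=
  match split j with inl i => phi Q1 i | inr i => phi Q2 i end.

Lemma meval_Xv_indicator i : meval indicator_point (Xv i) = phi Q1 i.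
Proof. by rewrite mevalXU /indicator_point (unsplitK (inl i)). Qed.

Lemma meval_Yv_indicator i : meval indicator_point (Yv i) = phi Q2 i.
Proof. by rewrite mevalXU /indicator_point (unsplitK (inr i)). Qed.

Lemma meval_sigma_indicator :
  Q1 :&: Q2 = set0 -> meval indicator_point (sigma n) = 1.
Proof.
move=> Q12; rewrite /sigma rmorph_prod /=; apply: big1 => i _.
rewrite mevalD mevalM meval_Xv_indicator meval_Yv_indicator meval1 /phi.
have : i \notin Q1 :&: Q2 by rewrite Q12 inE.
by rewrite inE; case: (i \in Q1); case: (i \in Q2); rewrite ?mul0r ?mul1r ?add0r.
Qed.

End IndicatorPoint.

Lemma consistency_of_one_memB n (Q : {set {set 'I_n}}) :
  memB [:: xiA (@Xv n) Q; xiA (@Yv n) Q; sigma n + 1] 1 -> consistency Q.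
Proof.
move=> [_ one_in_I] Q1 Q2 Q1Q Q2Q; apply/negP => /eqP Q12.
have gens0 g : g \in [:: xiA (@Xv n) Q; xiA (@Yv n) Q; sigma n + 1] ++ field_eqs n ->
    meval (indicator_point Q1 Q2) g = 0.
  rewrite mem_cat => /orP [|]; last exact: meval_field_eqs.
  rewrite !inE => /or3P [] /eqP ->.
  - exact: meval_xiA Q1Q (meval_Xv_indicator _ _).
  - exact: meval_xiA Q2Q (meval_Yv_indicator _ _).
  - by rewrite mevalD meval1 meval_sigma_indicator // F2_addrr.
by move/eqP: (meval_in_ideal gens0 one_in_I); rewrite meval1 oner_eq0.
Qed.

Theorem mainTheorem2 (n : nat) (Q F : {set {set 'I_n}}) (G : seq (BPoly n)) :
  fail_prone F ->
  groebner_basis [:: xiA (@Xv n) Q; xiA (@Yv n) Q; sigma n + 1] G ->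
  G =i [:: 1] ->
  consistency Q.
Proof.
move=> _ [G_sub_I _] G1; apply: consistency_of_one_memB.
by apply: G_sub_I; rewrite G1 inE.
Qed.
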